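(* If $D$ is a quaternary near-extremal Hermitian self-dual code of length $24$ and $\alpha$ denotes the number of codewords of weight $8$ in $D$, then $\alpha=9\beta$ for some integer $\beta$ with $1\le\beta\le 253$.
   Context: Let $\mathbb{F}_4=\{0,1,\omega,\omega^2\}$ with $\omega^2=\omega+1$. A quaternary code of length $n$ is a linear subspace of $\mathbb{F}_4^n$; it is Hermitian self-dual if it equals its dual with respect to $\langle x,y\rangle_H=\sum_k x_k y_k^2$. The weight of a vector is the number of nonzero coordinates. A quaternary Hermitian self-dual code of length $24$ is near-extremal if its minimum nonzero weight is $8$. *)

From mathcomp Require Import all_boot all_order all_algebra all_field.
Set Implicit Arguments. Unset Strict Implicit. Unset Printing Implicit Defensive.
Import GRing.Theory.
Local Open Scope ring_scope.

(* Quaternary codes: F is a finite field with #|F| = 4 (unique up to iso, i.e. F_4). *)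

Definition wt (F : finFieldType) (n : nat) (x : 'rV[F]_n) : nat :=
  #|[set i : 'I_n | x 0 i != 0]|.

Definition herm (F : finFieldType) (n : nat) (x y : 'rV[F]_n) : F :=
  \sum_(k < n) x 0 k * (y 0 k) ^+ 2.

Definition herm_self_dual (F : finFieldType) (n : nat) (C : {vspace 'rV[F]_n}) : Prop :=
  forall x : 'rV[F]_n, (x \in C) <-> (forall y : 'rV[F]_n, y \in C -> herm x y = 0).

Definition min_weight (F : finFieldType) (n : nat) (C : {vspace 'rV[F]_n}) (d : nat) : Prop :=
  (exists2 x, x \in C & (x != 0) && (wt x == d)) /\
  (forall x, x \in C -> x != 0 -> (d <= wt x)%N).

Definition num_weight (F : finFieldType) (n : nat) (C : {vspace 'rV[F]_n}) (w : nat) : nat :=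
  #|[set x : 'rV[F]_n | (x \in C) && (wt x == w)]|.

From Stdlib Require Import BinInt.
From mathcomp Require Import all_boot all_order all_algebra all_field.
From mathcomp Require Import mxabelem zify ssrZ.
Set Implicit Arguments. Unset Strict Implicit. Unset Printing Implicit Defensive.
Import GRing.Theory Num.Theory.

(* Let A_w be the number of codewords of weight w, and split the weight-8 words
   into the B8 vanishing and the C8 not vanishing at a fixed coordinate j.
   Squaring the coordinates maps a Hermitian self-dual D onto its Euclidean
   dual, so for every coordinate set S the number of codewords vanishing on S,
   times 4^|S|, is |D| times the number of codewords supported in S; taking S
   to be everything gives |D| = 2^24.
   Summing over the sets S of size r + 1 containing j gives, for each r, a linear
   relation between the numbers of codewords of each weight that do or do not
   vanish at j.  As weights are even and at least 8, integer combinations of the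
   relations for r = 8, ..., 14 yield B8 = 2 C8 and A10 + 8 A8 = 18216.  The three
   nonzero scalars show 3 | C8, hence A8 = B8 + C8 = 3 C8 is divisible by 9,
   and A10 >= 0 gives A8 <= 2277 = 9 * 253. *)

Section SubsetCounting.
Variable T : finType.
Implicit Types (j : T) (U : {set T}).

Lemma card_subsets_through j r U :
  #|[set S : {set T} | (j \in S) && (#|S| == r.+1) && (S \subset U)]|
    = ((j \in U) * 'C(#|U|.-1, r))%N.
Proof.
have [jU|jNU] := boolP (j \in U); last first.
  apply: eq_card0 => S; rewrite !inE.
  by apply/negP => /andP[/andP[jS _] /subsetP/(_ _ jS)]; apply/negP.
have notin_sub (S : {set T}) : S \subset U :\ j -> j \notin S.
  by move=> sSU; apply/negP => /(subsetP sSU); rewrite !inE eqxx.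
have ->: #|U|.-1 = #|U :\ j| by rewrite (cardsD1 j U) jU.
rewrite mul1n -cards_draws -(@card_in_imset _ _ (fun S => j |: S)
  [set S : {set T} | S \subset U :\ j & #|S| == r]); last first.
  move=> S1 S2; rewrite !inE => /andP[s1 _] /andP[s2 _] E.
  by rewrite -(setU1K (notin_sub _ s1)) -(setU1K (notin_sub _ s2)) E.
apply: eq_card => S; rewrite !inE; apply/idP/imsetP => [|[S' + ->]].
  move=> /andP[/andP[jS /eqP cS] sSU]; exists (S :\ j); last by rewrite setD1K.
  by rewrite inE setSD //=; move: cS; rewrite (cardsD1 j S) jS add1n => -[->].
by rewrite inE => /andP[sS' /eqP <-]; rewrite setU11 cardsU1 (notin_sub _ sS') eqxx
  subUset sub1set jU (subset_trans sS') ?subD1set.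
Qed.

Lemma card_supersets r U : r <= #|T| ->
  #|[set S : {set T} | (#|S| == r) && (U \subset S)]| = 'C(#|~: U|, #|T| - r).
Proof.
move=> rT; rewrite -cards_draws -[RHS](card_imset _ (@setC_inj T)).
apply: eq_card => S; rewrite !inE; apply/idP/imsetP => [|[S' + ->]].
  move=> /andP[/eqP cS uS]; exists (~: S); last by rewrite setCK.
  by rewrite inE setCS uS -cS; have := cardsC S; lia.
by rewrite inE -setCS setCK => /andP[-> /eqP cS']; have := cardsC S'; lia.
Qed.

Lemma sum_indicator_card (P Q : pred T) :
  (\sum_(x | P x) Q x)%N = #|[set x | P x && Q x]|.
Proof.
by rewrite -sum1dep_card big_mkcondr; apply: eq_bigr => x _; case: (Q x).
Qed.

End SubsetCounting.

Local Open Scope ring_scope.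

Lemma sumr_indicator (R : pzSemiRingType) (T : finType) (P Q : pred T) :
  \sum_(x | P x) (Q x)%:R = #|[set x | P x && Q x]|%:R :> R.
Proof. by rewrite -natr_sum sum_indicator_card. Qed.

Section Supports.
Variables (R : nzRingType) (n : nat).
Implicit Types (S : {set 'I_n}) (c : 'rV[R]_n).

Definition supp c := [set i | c 0 i != 0].

Definition mask_mx S : 'M[R]_n := diag_mx (\row_i (i \in S)%:R).

Lemma mask_mxE c S i : (c *m mask_mx S) 0 i = if i \in S then c 0 i else 0.
Proof. by rewrite mul_mx_diag !mxE; case: (i \in S); rewrite ?mulr1 ?mulr0. Qed.

Lemma tr_mask_mx S : (mask_mx S)^T = mask_mx S.
Proof. exact: tr_diag_mx. Qed.

Lemma supp_eq0 c : (supp c == set0) = (c == 0).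
Proof.
apply/eqP/eqP => [c0 | ->]; last by apply/setP => i; rewrite !inE mxE eqxx.
apply/rowP => i; rewrite mxE; apply/eqP; apply: contraT => ci.
by have := in_set0 i; rewrite -c0 inE ci.
Qed.

Lemma supp_mask c S : supp (c *m mask_mx S) = supp c :&: S.
Proof. by apply/setP => i; rewrite !inE mask_mxE andbC; case: (i \in S); rewrite ?eqxx. Qed.

Lemma mask_mx_eq0 c S : (c *m mask_mx S == 0) = (S \subset ~: supp c).
Proof. by rewrite -supp_eq0 supp_mask setI_eq0 disjoint_sym disjoints_subset. Qed.

Lemma mask_mx_id c S : supp c \subset S -> c *m mask_mx S = c.
Proof.
move=> /subsetP cS; apply/rowP => i; rewrite mask_mxE.
case: ifP => // /negbT iS; apply/esym/eqP; apply: contraR iS => ci.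
by apply: cS; rewrite inE.
Qed.

Lemma mask_mx_split c S : c *m mask_mx S + c *m mask_mx (~: S) = c.
Proof.
by apply/rowP => i; rewrite mxE !mask_mxE inE; case: (i \in S); rewrite ?addr0 ?add0r.
Qed.

End Supports.
Arguments mask_mx {R n} S.

Section CodeDuality.
Variables (F : finFieldType) (n : nat).
Implicit Types (S : {set 'I_n}) (c f g : 'rV[F]_n).

Lemma card_kermx m (M : 'M[F]_(n, m)) :
  #|[set f : 'rV_n | f *m M == 0]| = (#|F| ^ (n - \rank M))%N.
Proof. by rewrite -mxrank_ker -card_rowg; apply: eq_card => f; rewrite !inE sub_kermx. Qed.

Lemma card_supp_sub S : #|[set c : 'rV[F]_n | supp c \subset S]| = (#|F| ^ #|S|)%N.
Proof.
pose vec (h : {ffun 'I_n -> F}) : 'rV[F]_n := \row_i h i.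
have vec_inj : injective vec.
  by move=> h1 h2 /rowP E; apply/ffunP => i; have := E i; rewrite !mxE.
rewrite -(card_pffun_on 0 S (predT : {pred F})) -(card_imset _ vec_inj).
apply: eq_card => c; rewrite inE; apply/idP/imsetP => [cS | [h /pffun_onP[hS _] ->]].
  exists [ffun i => c 0 i]; last by apply/rowP => i; rewrite !mxE ffunE.
  by apply/pffun_onP; split=> //; apply: subset_trans cS; apply/subsetP => i; rewrite !inE ffunE.
by apply: subset_trans hS; apply/subsetP => i; rewrite !inE mxE.
Qed.

Lemma card_mask_split m (K : 'M[F]_(n, m)) S :
  (#|[set f : 'rV[F]_n | (supp f \subset S) && (f *m K == 0%R)]|
    * #|[set g : 'rV[F]_n | supp g \subset ~: S]|)%N
  = #|[set f : 'rV[F]_n | f *m (mask_mx S *m K) == 0]|.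
Proof.
have proj f g : supp f \subset S -> supp g \subset ~: S -> (f + g) *m mask_mx S = f.
  move=> fS gS; have /eqP g0 : g *m mask_mx S == 0 by rewrite mask_mx_eq0 -setCS setCK.
  by rewrite mulmxDl mask_mx_id // g0 addr0.
rewrite -cardsX -(@card_in_imset _ _ (fun p => p.1 + p.2)); last first.
  move=> [a b] [a' b']; rewrite !inE /= => /andP[/andP[aS _] bS] /andP[/andP[a'S _] b'S] E.
  have Ea : a = a' by rewrite -(proj a b) // E proj.
  by move: E; rewrite Ea => /addrI ->.
apply: eq_card => f; rewrite inE; apply/imsetP/idP => [[[a b]] | fSK].
  by rewrite !inE /= => /andP[/andP[aS aK] bS] ->; rewrite mulmxA proj.
exists (f *m mask_mx S, f *m mask_mx (~: S)); last by rewrite mask_mx_split.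
by rewrite !inE /= !supp_mask !subsetIr -mulmxA fSK.
Qed.

Lemma card_shortened_dual m (G : 'M[F]_(m, n)) S :
  (#|[set c : 'rV[F]_n | (c <= G)%MS && (S \subset ~: supp c)]| * #|F| ^ #|S|
    = #|F| ^ \rank G * #|[set f : 'rV[F]_n | (supp f \subset S) && (f *m G^T == 0%R)]|)%N.
Proof.
have cardGS : #|[set c : 'rV[F]_n | (c <= G)%MS && (S \subset ~: supp c)]|
    = (#|F| ^ \rank (G :&: kermx (mask_mx S)))%N.
  by rewrite -card_rowg; apply: eq_card => c; rewrite !inE sub_capmx sub_kermx mask_mx_eq0.
have rk : \rank (mask_mx S *m G^T) = \rank (G *m mask_mx S).
  by rewrite -mxrank_tr trmx_mul trmxK tr_mask_mx.
have := card_mask_split G^T S; rewrite card_supp_sub card_kermx rk cardGS.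
have := mxrank_mul_ker G (mask_mx S); have := rank_leq_col (G *m mask_mx S).
have := cardsC S; rewrite card_ord.
set q := #|F|; set rGS := \rank (G *m _); set rK := \rank (_ :&: _).
move=> cS rGS_n <- dualS.
have q_gt0 : (0 < q)%N by apply/card_gt0P; exists 0.
apply/eqP; rewrite -(@eqn_pmul2r (q ^ #|~: S|)) ?expn_gt0 ?q_gt0 //.
rewrite -mulnA -expnD cS -mulnA dualS.
by rewrite -!expnD addnAC subnKC // addnC.
Qed.

End CodeDuality.

Section Weights.
Variables (F : finFieldType) (n : nat).
Implicit Types (c : 'rV[F]_n) (D : {vspace 'rV[F]_n}).

Lemma wtE c : wt c = #|supp c|.
Proof. by []. Qed.

Lemma wt_eq0 c : (wt c == 0%N) = (c == 0).
Proof. by rewrite wtE cards_eq0 supp_eq0. Qed.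

Lemma wt_le c : (wt c <= n)%N.
Proof. by rewrite wtE -[X in (_ <= X)%N]card_ord max_card. Qed.

Lemma supp_scale (a : F) c : a != 0 -> supp (a *: c) = supp c.
Proof. by move=> a0; apply/setP => i; rewrite !inE mxE mulf_eq0 negb_or a0. Qed.

Lemma card_wt_in_supp D w (j : 'I_n) :
  #|[set c in D | (wt c == w) && (j \in supp c)]|
    = (#|F|.-1 * #|[set c in D | ((wt c == w) && (c 0 j == 1))%R]|)%N.
Proof.
have ->: #|F|.-1 = #|[set a : F | a != 0]|.
  by rewrite -(cardC1 0); apply: eq_card => a; rewrite !inE.
rewrite -cardsX -(@card_in_imset _ _ (fun p => p.1 *: p.2)); last first.
  move=> [a c] [a' c']; rewrite !inE /= => /andP[a0 /andP[_ /andP[_ /eqP cj]]].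
  move=> /andP[a'0 /andP[_ /andP[_ /eqP c'j]]] E.
  have Ea : a = a' by have := congr1 (fun v : 'rV[F]_n => v 0 j) E; rewrite !mxE cj c'j !mulr1.
  by move: E; rewrite Ea => /(scalerI a'0) ->.
apply: eq_card => c; rewrite inE; apply/idP/imsetP => [|[[a c'] + ->]].
  move=> /andP[cD /andP[/eqP wc]]; rewrite inE => cj; exists (c 0 j, (c 0 j)^-1 *: c).
    by rewrite !inE /= cj memvZ //= wtE supp_scale ?invr_eq0 // -wtE wc eqxx mxE mulVf ?eqxx.
  by rewrite /= scalerA divff // scale1r.
rewrite !inE /= => /andP[a0 /andP[c'D /andP[wc' /eqP c'j]]].
by rewrite memvZ //= wtE supp_scale // -wtE wc' mxE c'j mulr1.
Qed.

End Weights.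

Section Quaternary.
Variables (F : finFieldType) (HF : #|F| = 4%N) (n : nat).
Implicit Types (x y c : 'rV[F]_n).

Lemma pchar_quaternary : (2 \in [pchar F])%N.
Proof. exact: (@card_finPcharP _ 2 2). Qed.

Lemma expf4 (a : F) : a ^+ 4 = a.
Proof. by rewrite -{2}(expf_card a) HF. Qed.

Lemma expf3 (a : F) : a != 0 -> a ^+ 3 = 1.
Proof. by move=> a0; apply: (mulfI a0); rewrite -exprS expf4 mulr1. Qed.

Definition frob y : 'rV[F]_n := map_mx (fun a => a ^+ 2) y.

Lemma frobK : involutive frob.
Proof. by move=> y; apply/rowP => i; rewrite !mxE -exprM expf4. Qed.

Lemma supp_frob y : supp (frob y) = supp y.
Proof. by apply/setP => i; rewrite !inE mxE expf_eq0. Qed.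

Lemma herm_frobE x y : herm x y = (x *m (frob y)^T) 0 0.
Proof. by rewrite mxE; apply: eq_bigr => k _; rewrite !mxE. Qed.

Lemma herm_sqr x y : herm x y ^+ 2 = herm y x.
Proof.
rewrite -[LHS]/(pFrobenius_aut pchar_quaternary (herm x y)) rmorph_sum.
apply: eq_bigr => k _; rewrite -[LHS]/((x 0 k * y 0 k ^+ 2) ^+ 2).
by rewrite exprMn -exprM expf4 mulrC.
Qed.

Lemma herm_eq0C x y : (herm x y == 0) = (herm y x == 0).
Proof. by rewrite -herm_sqr expf_eq0. Qed.

Lemma herm_self c : herm c c = (wt c)%:R.
Proof.
rewrite /herm wtE -sum1_card natr_sum [RHS]big_mkcond /=; apply: eq_bigr => k _.
rewrite inE -exprS; have [->|ck] := eqVneq (c 0 k) 0; first by rewrite expr0n.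
by rewrite expf3.
Qed.

End Quaternary.

Section Generator.
Variables (F : finFieldType) (n : nat) (D : {vspace 'rV[F]_n}).

Definition genmx : 'M[F]_(\dim D, n) := \matrix_i (vbasis D)`_i.

Lemma memv_genmx c : (c \in D) = (c <= genmx)%MS.
Proof.
apply/idP/idP => [cD | /submxP[u ->]].
  rewrite (coord_vbasis cD); apply: summx_sub => i _; apply: scalemx_sub.
  by rewrite -[_`_i](rowK (fun i => (vbasis D)`_i)) row_sub.
rewrite mulmx_sum_row; apply: rpred_sum => i _; apply: rpredZ.
by rewrite rowK vbasis_mem // mem_nth // size_tuple.
Qed.

Lemma card_vspace : #|D| = (#|F| ^ \rank genmx)%N.
Proof. by rewrite -card_rowg; apply: eq_card => c; rewrite inE memv_genmx. Qed.

End Generator.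

Section DoubleCounting.
Variables (F : finFieldType) (n : nat) (D : {vspace 'rV[F]_n}).

Lemma sum_card_vanishing (j : 'I_n) r :
  (\sum_(S : {set 'I_n} | (j \in S) && (#|S| == r.+1))
      #|[set c in D | S \subset ~: supp c]|
   = \sum_(c in D) (j \notin supp c) * 'C(n - wt c - 1, r))%N.
Proof.
rewrite (eq_bigr (fun S : {set 'I_n} => \sum_(c in D) (S \subset ~: supp c))%N); last first.
  by move=> S _; rewrite sum_indicator_card.
rewrite exchange_big; apply: eq_bigr => c _; rewrite sum_indicator_card.
by rewrite card_subsets_through inE [#|~: supp c|]cardsCs setCK card_ord wtE subn1.
Qed.

Lemma sum_card_supported (j : 'I_n) r : (r < n)%N ->
  (\sum_(S : {set 'I_n} | (j \in S) && (#|S| == r.+1))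
      #|[set c in D | supp c \subset S]|
   = \sum_(c in D) 'C(n - (wt c + (j \notin supp c)), n - r.+1))%N.
Proof.
move=> rn; rewrite (eq_bigr (fun S : {set 'I_n} => \sum_(c in D) (supp c \subset S))%N); last first.
  by move=> S _; rewrite sum_indicator_card.
rewrite exchange_big; apply: eq_bigr => c _; rewrite sum_indicator_card.
rewrite (eq_card (B := [set S : {set 'I_n} | (#|S| == r.+1) && (j |: supp c \subset S)])).
  by rewrite card_supersets card_ord // cardsCs setCK card_ord cardsU1 addnC.
by move=> S; rewrite !inE subUset sub1set; case: (j \in S); rewrite ?andbF.
Qed.

End DoubleCounting.

Lemma Z_of_natE n : Z.of_nat n = n%:R.
Proof. by rewrite -[in LHS](natn n) rmorph_nat. Qed.

(* Binomial coefficients as binary integers, built by Pascal's rule, so that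
   [vm_compute] can evaluate the large moment combinations below. *)
Fixpoint pascal_step (p : Z) (s : seq Z) : seq Z :=
  if s is x :: s' then p + x :: pascal_step x s' else [:: p].

Definition pascal_row (a : nat) : seq Z := iter a (pascal_step 0) [:: 1].

Definition binZ (a b : nat) : Z := nth 0 (pascal_row a) b.

Lemma nth_pascal_step p s k :
  nth 0 (pascal_step p s) k = nth 0 (p :: s) k + nth 0 s k.
Proof.
by elim: s p k => [|x s IHs] p [|k] /=; rewrite ?addr0 ?IHs.
Qed.

Lemma binZE a b : binZ a b = Z.of_nat 'C(a, b).
Proof.
rewrite /binZ; elim: a b => [|a IHa] [|b] //=; first by case: b.
  by rewrite nth_pascal_step /= add0r IHa bin0.
by rewrite nth_pascal_step /= !IHa binS rmorphD addrC.
Qed.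

(* [self_dual_moment] with everything moved to one side, as the contribution of a
   codeword of weight [w]; [b] records whether it vanishes at the fixed coordinate. *)
Definition moment (n r w : nat) (b : bool) : Z :=
  (if b then binZ (n - w - 1) r else 0) * 4 ^+ r.+1
  - 2 ^+ n * binZ (n - (w + b)) (n - r.+1).

Section HermitianSelfDual.
Variables (F : finFieldType) (HF : #|F| = 4%N) (n : nat) (D : {vspace 'rV[F]_n}).
Hypothesis Hsd : herm_self_dual D.
Implicit Types (S : {set 'I_n}) (c y : 'rV[F]_n).

Lemma self_dual_frobE y : (y \in D) = (frob y *m (genmx D)^T == 0).
Proof.
have herm_rows : (forall c, c \in D -> herm c y = 0) <-> (genmx D *m (frob y)^T == 0).
  split=> [yD | /eqP GyT c]; last first.
    rewrite memv_genmx => /submxP[u ->].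
    by rewrite herm_frobE -mulmxA GyT mulmx0 mxE.
  apply/eqP/row_matrixP => i; rewrite row_mul row0; apply/rowP => k.
  by rewrite ord1 [RHS]mxE -herm_frobE yD // memv_genmx row_sub.
rewrite -trmx_eq0 trmx_mul trmxK; apply/idP/idP => [yD | /herm_rows yD].
  apply/herm_rows => c cD; apply/eqP; rewrite herm_eq0C //; apply/eqP.
  by have [+ _] := Hsd y; apply.
by apply/Hsd => c cD; apply/eqP; rewrite herm_eq0C //; apply/eqP; apply: yD.
Qed.

Lemma card_self_dual_vanishing S :
  (#|[set c in D | S \subset ~: supp c]| * 4 ^ #|S|
    = #|D| * #|[set c in D | supp c \subset S]|)%N.
Proof.
have shortD : [set c | (c <= genmx D)%MS && (S \subset ~: supp c)]
    = [set c in D | S \subset ~: supp c] by apply/setP => c; rewrite !inE memv_genmx.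
rewrite -shortD -HF card_shortened_dual -card_vspace; congr (_ * _)%N.
have frobK_n := @frobK _ HF n.
rewrite -(card_imset _ (can_inj frobK_n)) (can2_imset_pre _ frobK_n frobK_n).
by apply: eq_card => f; rewrite !inE self_dual_frobE supp_frob andbC.
Qed.

Lemma card_self_dual : #|D| = (2 ^ n)%N.
Proof.
have := card_self_dual_vanishing setT.
have ->: [set c in D | setT \subset ~: supp c] = [set 0].
  apply/setP => c; rewrite !inE -mask_mx_eq0 mask_mx_id ?subsetT //.
  by rewrite andb_idl // => /eqP ->; apply: mem0v.
have ->: #|[set c in D | supp c \subset setT]| = #|D|.
  by apply: eq_card => c; rewrite !inE subsetT andbT.
have sq : (4 ^ n = (2 ^ n) ^ 2)%N by rewrite -expnM mulnC expnM.
by rewrite cards1 cardsT card_ord mul1n mulnn sq => /eqP; rewrite eqn_exp2r // => /eqP.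
Qed.

Lemma self_dual_moment (j : 'I_n) r : (r < n)%N ->
  ((\sum_(c in D) (j \notin supp c) * 'C(n - wt c - 1, r)) * 4 ^ r.+1
   = 2 ^ n * \sum_(c in D) 'C(n - (wt c + (j \notin supp c)), n - r.+1))%N.
Proof.
move=> rn; rewrite -sum_card_vanishing -sum_card_supported // -card_self_dual.
rewrite big_distrr big_distrl /=; apply: eq_bigr => S /andP[_ /eqP <-].
exact: card_self_dual_vanishing.
Qed.

Lemma sum_moment_eq0 (j : 'I_n) r : (r < n)%N ->
  \sum_(c in D) moment n r (wt c) (j \notin supp c) = 0.
Proof.
move=> rn; have := congr1 Z.of_nat (self_dual_moment j rn).
have ZX m k : Z.of_nat (m ^ k) = Z.of_nat m ^+ k.
  by elim: k => // k IHk; rewrite expnS exprS rmorphM /= IHk.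
rewrite !rmorphM /= !ZX !rmorph_sum /= => E.
rewrite sumrB -mulr_suml -mulr_sumr; apply/eqP; rewrite subr_eq0; apply/eqP.
rewrite (eq_bigr (fun c => Z.of_nat ((j \notin supp c) * 'C(n - wt c - 1, r)))); last first.
  by move=> c _; case: (j \notin supp c); rewrite ?binZE ?mul1n.
by rewrite [in RHS](eq_bigr _ (fun c _ => binZE _ _)).
Qed.

Lemma wt_self_dual_even c : c \in D -> ~~ odd (wt c).
Proof.
move=> cD; have /eqP : herm c c = 0 by have [+ _] := Hsd c; apply.
by rewrite herm_self // -(dvdn_pcharf (pchar_quaternary HF)) dvdn2.
Qed.

End HermitianSelfDual.

Definition weights24 : seq nat := [:: 0; 8; 10; 12; 14; 16; 18; 20; 22; 24]%N.

Definition combo (lam : seq (nat * Z)) (w : nat) (b : bool) : Z :=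
  \sum_(p <- lam) p.2 * moment 24 p.1 w b.

(* The pair [(0, false)] is excluded since the zero word vanishes everywhere. *)
Definition agrees (lam : seq (nat * Z)) (T : nat -> bool -> Z) : bool :=
  all (fun w => all (fun b => ((w == 0%N) ==> b) ==> (combo lam w b == T w b))
                    [:: true; false]) weights24.

(* Integer combinations of the identities [sum_moment_eq0] for r = 8, ..., 14,
   found by solving a small linear system, whose coefficients on the admissible
   pairs (w, b) are K_split (2 C8 - B8) and K_bound (A10 + 8 A8 - 18216 A0). *)
Section Witnesses.
Local Open Scope Z_scope.

Definition lam_split : seq (nat * Z) :=
  [:: (8%nat, 20800); (9%nat, -43680); (10%nat, 44304); (11%nat, -26664);
      (12%nat, 9372); (13%nat, -1950); (14%nat, 195)].

Definition K_split : Z := 9017283837952.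

Definition lam_bound : seq (nat * Z) :=
  [:: (8%nat, 192); (9%nat, -480); (10%nat, 440); (12%nat, -110);
      (13%nat, 30); (14%nat, -3)].

Definition K_bound : Z := 173409304576.

Definition total_bound : Z := 18216.

End Witnesses.

Lemma agrees_split : agrees lam_split
  (fun w b => K_split * (((w == 8%N) && ~~ b)%:R *+ 2 - ((w == 8%N) && b)%:R)).
Proof. by rewrite /agrees /combo unlock; vm_compute. Qed.

Lemma agrees_bound : agrees lam_bound
  (fun w b => K_bound * ((w == 10%N)%:R + (w == 8%N)%:R *+ 8 - (w == 0%N)%:R * total_bound)).
Proof. by rewrite /agrees /combo unlock; vm_compute. Qed.

Section NearExtremal24.
Variables (F : finFieldType) (HF : #|F| = 4%N) (D : {vspace 'rV[F]_24}).
Hypotheses (Hsd : herm_self_dual D) (Hmin : min_weight D 8).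
Implicit Types (c : 'rV[F]_24).

Lemma wt_near_extremal c : c \in D -> wt c \in weights24.
Proof.
move=> cD; have [->|c0] := eqVneq c 0.
  by suff /eqP-> : wt (0 : 'rV[F]_24) == 0%N by []; rewrite wt_eq0.
have := Hmin.2 c cD c0; have := wt_self_dual_even HF Hsd cD; have := wt_le c.
by move: (wt c); do 25?[case=> //].
Qed.

Lemma sum_profile_eq0 (j : 'I_24) lam T : all (fun p => p.1 < 24)%N lam -> agrees lam T ->
  \sum_(c in D) T (wt c) (j \notin supp c) = 0.
Proof.
move=> lam24 /allP agr; transitivity (\sum_(c in D) combo lam (wt c) (j \notin supp c)).
  apply: eq_bigr => c cD; apply/esym/eqP.
  have /agr/allP/(_ (j \notin supp c)) agr_c := wt_near_extremal cD.
  apply: (implyP (agr_c _)); first by case: (_ \notin _).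
  by rewrite wt_eq0; apply/implyP => /eqP->; rewrite inE mxE eqxx.
rewrite exchange_big big1_seq // => p /andP[_ lam_p].
by rewrite -mulr_sumr sum_moment_eq0 ?mulr0 //; apply: (allP lam24).
Qed.

Lemma num_weight_split (j : 'I_24) w :
  num_weight D w = (#|[set c in D | (wt c == w) && (j \notin supp c)]|
                    + #|[set c in D | (wt c == w) && (j \in supp c)]|)%N.
Proof.
rewrite /num_weight -(cardsID [set c | j \notin supp c]); congr (_ + _)%N.
  by apply: eq_card => c; rewrite !inE andbA.
by apply: eq_card => c; rewrite !inE negbK; case: (_ != _); rewrite ?andbT ?andbF.
Qed.

Lemma card_wt8_split (j : 'I_24) :
  #|[set c in D | (wt c == 8%N) && (j \notin supp c)]|
    = (2 * #|[set c in D | (wt c == 8%N) && (j \in supp c)]|)%N.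
Proof.
have := sum_profile_eq0 j (lam := lam_split) isT agrees_split.
rewrite -mulr_sumr sumrB sumrMnl !sumr_indicator => /eqP.
rewrite mulf_eq0 orFb subr_eq0 -mulrnA eqr_nat mulnC => /eqP <-.
by congr (2 * _)%N; apply: eq_card => c; rewrite !inE negbK.
Qed.

Lemma num_weight_bound : (num_weight D 8 <= 2277)%N.
Proof.
have A0 : [set c in D | wt c == 0%N] = [set 0].
  apply/setP => c; rewrite !inE wt_eq0 andb_idl // => /eqP->; exact: mem0v.
have := sum_profile_eq0 0 (lam := lam_bound) isT agrees_bound.
have sum10_8 : \sum_(c in D) ((wt c == 10%N)%:R + (wt c == 8%N)%:R *+ 8)
    = (#|[set c in D | wt c == 10%N]| + #|[set c in D | wt c == 8%N]| * 8)%:R :> Z.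
  by rewrite big_split /= sumrMnl !sumr_indicator natrD mulrnA.
rewrite -mulr_sumr sumrB sum10_8 -mulr_suml sumr_indicator A0 cards1 mul1r => /eqP.
rewrite mulf_eq0 orFb subr_eq0 -Z_of_natE /num_weight /total_bound /= => /eqP.
set a := #|[set c in D | wt c == 10%N]|; set b := #|[set c in D | wt c == 8%N]|.
lia.
Qed.

End NearExtremal24.

Theorem fact5p1 (F : finFieldType) (HF : #|F| = 4%N) (D : {vspace 'rV[F]_24})
  (Hsd : herm_self_dual D) (Hmin : min_weight D 8) :
  exists beta : nat, num_weight D 8 = (9 * beta)%N /\ (1 <= beta <= 253)%N.
Proof.
pose j : 'I_24 := 0.
exists #|[set c in D | (wt c == 8%N) && (c 0 j == 1)]|.
have alpha9 := num_weight_split D j 8.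
rewrite (card_wt8_split HF Hsd Hmin) card_wt_in_supp HF in alpha9.
have := num_weight_bound HF Hsd Hmin.
have [[c cD /andP[c0 /eqP wc]] _] := Hmin.
have : (0 < num_weight D 8)%N by apply/card_gt0P; exists c; rewrite inE cD wc eqxx.
lia.
Qed.
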